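(* Let $(A,\mu,\Delta,\alpha)$ be an infinitesimal Hom-bialgebra and define $x\bullet y=\alpha(y_1)(\alpha(x)y_2)$ (which equals $(y_1\alpha(x))\alpha(y_2)$) for $x,y\in A$. Then $(A,\bullet,\alpha^3)$ is a left Hom-pre-Lie algebra.
   Context: Notation $\mu(a\otimes b)=ab$, $\Delta(a)=a_1\otimes a_2$. An infinitesimal Hom-bialgebra $(A,\mu,\Delta,\alpha)$: $\alpha$ linear with $\alpha(xy)=\alpha(x)\alpha(y)$ and $\alpha(x)(yz)=(xy)\alpha(z)$; $(\alpha\otimes\alpha)\circ\Delta=\Delta\circ\alpha$ and $(\Delta\otimes\alpha)\circ\Delta=(\alpha\otimes\Delta)\circ\Delta$; and $\Delta(ab)=\alpha(a)b_1\otimes\alpha(b_2)+\alpha(a_1)\otimes a_2\alpha(b)$ for all $a,b$. A left Hom-pre-Lie algebra $(A,\cdot,\gamma)$: $\gamma(x\cdot y)=\gamma(x)\cdot\gamma(y)$ and $\gamma(x)\cdot(y\cdot z)-(x\cdot y)\cdot\gamma(z)=\gamma(y)\cdot(x\cdot z)-(y\cdot x)\cdot\gamma(z)$ for all $x,y,z$. *)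

From HB Require Import structures.
From mathcomp Require Import all_boot all_order all_algebra.
Set Implicit Arguments. Unset Strict Implicit. Unset Printing Implicit Defensive.
Import GRing.Theory.
Local Open Scope ring_scope.

(* Tensor products A (x) A and A (x) A (x) A are modelled by finite formal sums
   (sequences of pairs / triples), two formal sums being identified iff every
   bilinear (resp. trilinear) map into every K-module takes the same value on
   them.  This is exactly the universal-property quotient defining the
   tensor product. *)

Section Defs.
Variables (K : fieldType) (A : lmodType K).

Definition linear_map (f : A -> A) : Prop :=
  forall (k : K) (a b : A), f (k *: a + b) = k *: f a + f b.

Definition bilinear_map (V : lmodType K) (f : A -> A -> V) : Prop :=
  (forall (k : K) (a a' b : A), f (k *: a + a') b = k *: f a b + f a' b) /\
  (forall (k : K) (a b b' : A), f a (k *: b + b') = k *: f a b + f a b').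

Definition trilinear_map (V : lmodType K) (f : A -> A -> A -> V) : Prop :=
  (forall (k : K) (a a' b c : A), f (k *: a + a') b c = k *: f a b c + f a' b c) /\
  (forall (k : K) (a b b' c : A), f a (k *: b + b') c = k *: f a b c + f a b' c) /\
  (forall (k : K) (a b c c' : A), f a b (k *: c + c') = k *: f a b c + f a b c').

Definition teq2 (s t : seq (A * A)) : Prop :=
  forall (V : lmodType K) (f : A -> A -> V), bilinear_map f ->
    \sum_(p <- s) f p.1 p.2 = \sum_(p <- t) f p.1 p.2.

Definition teq3 (s t : seq (A * A * A)) : Prop :=
  forall (V : lmodType K) (f : A -> A -> A -> V), trilinear_map f ->
    \sum_(p <- s) f p.1.1 p.1.2 p.2 = \sum_(p <- t) f p.1.1 p.1.2 p.2.

(* Infinitesimal Hom-bialgebra (A, mu, Delta, alpha);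
   Delta a is a formal-sum representative of Delta(a) = a_1 (x) a_2. *)
Record is_inf_Hom_bialgebra (mu : A -> A -> A) (Delta : A -> seq (A * A))
    (alpha : A -> A) : Prop := {
  ihb_mu_bilinear : bilinear_map mu;
  ihb_alpha_linear : linear_map alpha;
  ihb_Delta_linear : forall (k : K) (a b : A),
     teq2 (Delta (k *: a + b)) ([seq (k *: p.1, p.2) | p <- Delta a] ++ Delta b);
  ihb_alpha_mult : forall x y : A, alpha (mu x y) = mu (alpha x) (alpha y);
  ihb_hom_assoc : forall x y z : A, mu (alpha x) (mu y z) = mu (mu x y) (alpha z);
  ihb_alpha_comult : forall a : A,
     teq2 [seq (alpha p.1, alpha p.2) | p <- Delta a] (Delta (alpha a));
  (* (Delta (x) alpha) o Delta = (alpha (x) Delta) o Delta *)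
  ihb_hom_coassoc : forall a : A,
     teq3 (flatten [seq [seq (c.1, c.2, alpha p.2) | c <- Delta p.1] | p <- Delta a])
          (flatten [seq [seq (alpha p.1, c.1, c.2) | c <- Delta p.2] | p <- Delta a]);
  ihb_compat : forall a b : A,
     teq2 (Delta (mu a b))
          ([seq (mu (alpha a) p.1, alpha p.2) | p <- Delta b] ++
           [seq (alpha p.1, mu p.2 (alpha b)) | p <- Delta a])
}.

Definition hom_bullet (mu : A -> A -> A) (Delta : A -> seq (A * A))
    (alpha : A -> A) (x y : A) : A :=
  \sum_(p <- Delta y) mu (alpha p.1) (mu (alpha x) p.2).

Definition is_left_Hom_preLie (op : A -> A -> A) (gamma : A -> A) : Prop :=
  [/\ bilinear_map op, linear_map gamma,
      (forall x y : A, gamma (op x y) = op (gamma x) (gamma y))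
    & (forall x y z : A,
         op (gamma x) (op y z) - op (op x y) (gamma z)
         = op (gamma y) (op x z) - op (op y x) (gamma z))].

End Defs.

(* Expanding both Delta's by the compatibility condition writes
   a^3 x . (y . z) as a sum of three Sweedler double sums.  Hom-associativity
   identifies the middle one with (x . y) . a^3 z, and Hom-coassociativity
   followed by Hom-associativity turns the last one into the first with x and y
   exchanged.  Hence the associator a^3 x . (y . z) - (x . y) . a^3 z equals
   associator_half x y z + associator_half y x z, symmetric in x and y. *)

From HB Require Import structures.
From mathcomp Require Import all_boot all_order all_algebra.
Set Implicit Arguments. Unset Strict Implicit. Unset Printing Implicit Defensive.
Import GRing.Theory.
Local Open Scope ring_scope.

Section LinearFun.
Variables (K : pzRingType) (U V : lmodType K) (f : U -> V).
Hypothesis f_linear : linear f.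

Let f_lin : {linear U -> V} := HB.pack f (GRing.isLinear.Build K U V _ f f_linear).

Lemma linear_funZ k u : f (k *: u) = k *: f u.
Proof. exact: (linearZ_LR f_lin). Qed.

Lemma linear_fun_sum (I : Type) (s : seq I) (F : I -> U) :
  f (\sum_(i <- s) F i) = \sum_(i <- s) f (F i).
Proof. exact: (linear_sum f_lin). Qed.

End LinearFun.

Section InfHomBialgebra.
Variables (K : fieldType) (A : lmodType K).
Variables (mu : A -> A -> A) (Delta : A -> seq (A * A)) (alpha : A -> A).
Hypothesis ihb : is_inf_Hom_bialgebra mu Delta alpha.

Local Notation α := alpha.
Local Notation α3 x := (α (α (α x))).
Local Notation "x · y" := (mu x y) (at level 40, left associativity).
Local Notation "x • y" := (hom_bullet mu Delta alpha x y) (at level 40, left associativity).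

Lemma alpha_linear : linear α.
Proof. exact: (ihb_alpha_linear ihb). Qed.

Lemma mu_linearl y k x x' : (k *: x + x') · y = k *: (x · y) + x' · y.
Proof. exact: (ihb_mu_bilinear ihb).1. Qed.

Lemma mu_linearr x k y y' : x · (k *: y + y') = k *: (x · y) + x · y'.
Proof. exact: (ihb_mu_bilinear ihb).2. Qed.

Lemma alpha_mul x y : α (x · y) = α x · α y.
Proof. exact: (ihb_alpha_mult ihb). Qed.

Lemma mu_hom_assoc x y z : α x · (y · z) = (x · y) · α z.
Proof. exact: (ihb_hom_assoc ihb). Qed.

Ltac multilinear :=
  repeat split => * /=; rewrite ?(alpha_linear, mu_linearl, mu_linearr) //.

Definition sweedler (V : lmodType K) (f : A -> A -> V) (w : A) : V :=
  \sum_(p <- Delta w) f p.1 p.2.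

Lemma sweedler_linear (V : lmodType K) (f : A -> A -> V) :
  bilinear_map f -> linear (sweedler f).
Proof.
move=> fb k u v; rewrite /sweedler (ihb_Delta_linear ihb k u v fb) big_cat big_map /=.
congr (_ + _); rewrite scaler_sumr; apply: eq_bigr => p _.
by rewrite (linear_funZ (fun k x x' => fb.1 k x x' p.2)).
Qed.

Lemma sweedler_mul (V : lmodType K) (f : A -> A -> V) u v :
  bilinear_map f ->
  sweedler f (u · v) = sweedler (fun v1 v2 => f (α u · v1) (α v2)) v
                     + sweedler (fun u1 u2 => f (α u1) (u2 · α v)) u.
Proof. by move=> fb; rewrite /sweedler (ihb_compat ihb u v fb) big_cat !big_map. Qed.

Lemma sweedler_alpha (V : lmodType K) (f : A -> A -> V) w :
  bilinear_map f -> sweedler f (α w) = sweedler (fun w1 w2 => f (α w1) (α w2)) w.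
Proof. by move=> fb; rewrite /sweedler -(ihb_alpha_comult ihb w fb) big_map. Qed.

Lemma sweedler_coassoc (V : lmodType K) (g : A -> A -> A -> V) w :
  trilinear_map g ->
  sweedler (fun w1 w2 => sweedler (fun c1 c2 => g c1 c2 (α w2)) w1) w
  = sweedler (fun w1 w2 => sweedler (g (α w1)) w2) w.
Proof.
move=> gt; have := ihb_hom_coassoc ihb w gt.
rewrite !big_flatten /= !big_map /sweedler.
by under eq_bigr do rewrite big_map; under [in RHS]eq_bigr do rewrite big_map.
Qed.

Lemma sweedlerD (V : lmodType K) (f g : A -> A -> V) w :
  sweedler f w + sweedler g w = sweedler (fun w1 w2 => f w1 w2 + g w1 w2) w.
Proof. by rewrite /sweedler big_split. Qed.

Lemma hom_bulletE x y : x • y = sweedler (fun y1 y2 => α y1 · (α x · y2)) y.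
Proof. by []. Qed.

Lemma hom_bullet_linear x : linear (hom_bullet mu Delta alpha x).
Proof. by apply: (@sweedler_linear _ (fun y1 y2 => α y1 · (α x · y2))); multilinear. Qed.

Definition associator_half x y z : A :=
  sweedler (fun z1 z2 => sweedler (fun r1 r2 =>
    α (α (α z1) · (α (α x) · r1)) · (α (α3 y) · α (α r2))) z2) z.

Lemma hom_bullet_nested_r x y z :
  α3 x • (y • z) = associator_half y x z
  + sweedler (fun z1 z2 => sweedler (fun r1 r2 =>
      α (α (α z1) · α (α r1)) · (α (α3 x) · α (α r2 · α z2))) y) z
  + sweedler (fun z1 z2 => sweedler (fun p1 p2 =>
      α (α (α p1)) · (α (α3 x) · (α p2 · α (α y · z2)))) z1) z.
Proof.
rewrite /associator_half !sweedlerD [y • z]hom_bulletE {1}/sweedler.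
rewrite (linear_fun_sum (hom_bullet_linear _)).
apply: eq_bigr => q _ /=.
rewrite hom_bulletE !sweedler_mul ?sweedler_alpha //; multilinear.
Qed.

Lemma hom_bullet_nested_l x y z :
  (x • y) • α3 z = sweedler (fun z1 z2 => sweedler (fun r1 r2 =>
    α (α3 z1) · (α (α r1 · (α x · r2)) · α3 z2)) y) z.
Proof.
rewrite hom_bulletE !sweedler_alpha; try multilinear.
apply: eq_bigr => q _ /=; rewrite hom_bulletE /sweedler.
rewrite (linear_fun_sum alpha_linear) (linear_fun_sum (f := mu^~ _) (mu_linearl _)).
exact: (linear_fun_sum (mu_linearr _)).
Qed.

Lemma mid_term_hom_assoc x q1 q2 r1 r2 :
  α (α (α q1) · α (α r1)) · (α (α3 x) · α (α r2 · α q2))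
  = α (α3 q1) · (α (α r1 · (α x · r2)) · α3 q2).
Proof.
rewrite !alpha_mul.
have -> : α (α3 x) · (α (α r2) · α (α q2)) = α (α3 x · (α r2 · α q2)).
  by rewrite !alpha_mul.
rewrite -mu_hom_assoc; congr (_ · _).
rewrite -mu_hom_assoc; congr (_ · _).
exact: mu_hom_assoc.
Qed.

Lemma nested_r_mid_term x y z :
  sweedler (fun z1 z2 => sweedler (fun r1 r2 =>
      α (α (α z1) · α (α r1)) · (α (α3 x) · α (α r2 · α z2))) y) z
  = (x • y) • α3 z.
Proof.
rewrite hom_bullet_nested_l; apply: eq_bigr => q _; apply: eq_bigr => r _.
exact: mid_term_hom_assoc.
Qed.

Lemma last_term_hom_assoc x y z1 r1 r2 :
  α3 (α z1) · (α (α3 x) · (α r1 · (α (α y) · r2)))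
  = α (α (α z1) · (α (α x) · r1)) · (α (α3 y) · α (α r2)).
Proof.
rewrite !alpha_mul.
have -> : α (α3 y) · α (α r2) = α (α3 y · α r2) by rewrite !alpha_mul.
rewrite -mu_hom_assoc; congr (_ · _).
have -> : α3 y · α r2 = α (α (α y) · r2) by rewrite !alpha_mul.
by rewrite -mu_hom_assoc.
Qed.

Lemma nested_r_last_term x y z :
  sweedler (fun z1 z2 => sweedler (fun p1 p2 =>
      α (α (α p1)) · (α (α3 x) · (α p2 · α (α y · z2)))) z1) z
  = associator_half x y z.
Proof.
pose G u v w := α3 u · (α (α3 x) · (α v · (α (α y) · w))).
have G_trilinear : trilinear_map G by rewrite /G; multilinear.
transitivity (sweedler (fun z1 z2 => sweedler (fun c1 c2 => G c1 c2 (α z2)) z1) z).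
  by apply: eq_bigr => q _; apply: eq_bigr => p _; rewrite /G alpha_mul.
rewrite sweedler_coassoc //; apply: eq_bigr => q _; apply: eq_bigr => r _.
exact: last_term_hom_assoc.
Qed.

Lemma hom_bullet_associator x y z :
  α3 x • (y • z) - (x • y) • α3 z = associator_half x y z + associator_half y x z.
Proof.
by rewrite hom_bullet_nested_r nested_r_mid_term nested_r_last_term addrAC addrK addrC.
Qed.

Lemma hom_bullet_bilinear : bilinear_map (hom_bullet mu Delta alpha).
Proof.
split=> [k x x' y|k x y y']; last exact: hom_bullet_linear.
rewrite !hom_bulletE /sweedler scaler_sumr -big_split /=; apply: eq_bigr => p _.
by rewrite alpha_linear mu_linearl mu_linearr.
Qed.

Lemma alpha3_hom_bullet x y : α3 (x • y) = α3 x • α3 y.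
Proof.
rewrite [RHS]hom_bulletE !sweedler_alpha; try multilinear.
rewrite hom_bulletE /sweedler !(linear_fun_sum alpha_linear).
by apply: eq_bigr => p _; rewrite !alpha_mul.
Qed.

End InfHomBialgebra.

Theorem mainTheorem13 (K : fieldType) (A : lmodType K)
    (mu : A -> A -> A) (Delta : A -> seq (A * A)) (alpha : A -> A) :
  is_inf_Hom_bialgebra mu Delta alpha ->
  is_left_Hom_preLie (hom_bullet mu Delta alpha) (fun x => alpha (alpha (alpha x))).
Proof.
move=> ihb; split.
- exact: hom_bullet_bilinear.
- by move=> k x y; rewrite !(alpha_linear ihb).
- exact: alpha3_hom_bullet.
- by move=> x y z /=; rewrite !(hom_bullet_associator ihb) addrC.
Qed.
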